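(* Suppose $G$ is connected and $\Gamma_G$ is population monotonic. Then (a) any two triangles (subgraphs isomorphic to $K_3$) of $G$ that share at least one vertex share a common edge, and this common edge is the strictly maximum-weight edge of each of the two triangles; and (b) any two triangles of $G$ share at least one vertex, and in fact there is a single edge $uv$ of $G$ contained in every triangle of $G$ which is the maximum-weight edge of every triangle of $G$.
   Context: $G=(V,E;w)$ is a finite simple graph with edge weights $w:E\to\mathbb{R}$, $w_e>0$ for all $e\in E$. The matching game on $G$ is the cooperative game $\Gamma_G=(N,\gamma)$ with player set $N=V$ and, for $S\subseteq N$, $\gamma(S)$ equal to the maximum weight of a matching in the induced subgraph $G[S]$ (so $\gamma(\emptyset)=0$). A population monotonic allocation scheme (PMAS) is a family $(\boldsymbol{x}_S)_{\emptyset\neq S\subseteq N}$ with $\boldsymbol{x}_S=(x_{S,i})_{i\in S}\in\mathbb{R}^S$ such that (efficiency) $\sum_{i\in S}x_{S,i}=\gamma(S)$ for every nonempty $S\subseteq N$, and (monotonicity) $x_{S,i}\le x_{T,i}$ whenever $\emptyset\ne S\subseteq T\subseteq N$ and $i\in S$. $\Gamma_G$ is called population monotonic if it admits a PMAS. *)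

From HB Require Import structures.
From mathcomp Require Import all_boot all_order all_algebra.
Set Implicit Arguments. Unset Strict Implicit. Unset Printing Implicit Defensive.
Import Order.TTheory GRing.Theory Num.Theory.
Local Open Scope ring_scope.

(* A finite simple graph: vertex type V (finType), edge relation e that is
   symmetric and irreflexive; edge weights w : V -> V -> R, symmetric and
   positive on edges (values on non-edges are irrelevant). *)
Definition simple_graph (V : finType) (e : rel V) : Prop :=
  symmetric e /\ irreflexive e.

Definition edge_weights (R : realFieldType) (V : finType) (e : rel V)
  (w : V -> V -> R) : Prop :=
  (forall x y, w x y = w y x) /\ (forall x y, e x y -> 0 < w x y).

Definition connected_graph (V : finType) (e : rel V) : Prop :=
  forall u v, connect e u v.

(* A matching of the induced subgraph G[S], given as a set of ordered pairs
   (each edge listed once); distinct pairs have disjoint endpoints. *)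
Definition is_matching (V : finType) (e : rel V) (S : {set V})
  (M : {set V * V}) : bool :=
  [forall p in M, [&& e p.1 p.2, p.1 \in S & p.2 \in S]] &&
  [forall p in M, forall q in M, (p != q) ==>
     [&& p.1 != q.1, p.1 != q.2, p.2 != q.1 & p.2 != q.2]].

Definition matching_weight (R : realFieldType) (V : finType)
  (w : V -> V -> R) (M : {set V * V}) : R :=
  \sum_(p in M) w p.1 p.2.

Definition gamma (R : realFieldType) (V : finType) (e : rel V)
  (w : V -> V -> R) (S : {set V}) : R :=
  \big[Num.max/0]_(M : {set V * V} | is_matching e S M) matching_weight w M.

(* Population monotonic allocation scheme; x S i is x_{S,i}
   (values for i \notin S are irrelevant). *)
Definition is_PMAS (R : realFieldType) (V : finType) (e : rel V)
  (w : V -> V -> R) (x : {set V} -> V -> R) : Prop :=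
  (forall S : {set V}, S != set0 -> \sum_(i in S) x S i = gamma e w S) /\
  (forall (S T : {set V}) (i : V), S \subset T -> i \in S -> x S i <= x T i).

Definition population_monotonic (R : realFieldType) (V : finType) (e : rel V)
  (w : V -> V -> R) : Prop :=
  exists x : {set V} -> V -> R, is_PMAS e w x.

Definition is_triangle (V : finType) (e : rel V) (T : {set V}) : Prop :=
  #|T| = 3%N /\ (forall x y, x \in T -> y \in T -> x != y -> e x y).

Definition strict_max_edge (R : realFieldType) (V : finType)
  (w : V -> V -> R) (T : {set V}) (u v : V) : Prop :=
  [/\ u \in T, v \in T, u != v &
   forall x y, x \in T -> y \in T -> x != y ->
     [set x; y] != [set u; v] -> w x y < w u v].

From HB Require Import structures.
From mathcomp Require Import all_boot all_order all_algebra.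
From mathcomp Require Import lra.
Set Implicit Arguments. Unset Strict Implicit. Unset Printing Implicit Defensive.
Import Order.TTheory GRing.Theory Num.Theory.
Local Open Scope ring_scope.

(* The
   whole argument is about the pair shares  share i j := x_{i,j}(i), which by
   monotonicity bound the payoff of i in every coalition containing i and j,
   and which split the weight of an edge ij.
   - Matchings on three vertices have one edge, so the value of a three-vertex
     coalition is its heaviest edge; comparing with the pair shares shows that
     f gets nothing in its pair with c when bc is a heaviest edge of {b, c, f}.
   - In a triangle the vertex opposite a heaviest edge (its apex) gets nothing,
     the heavy edge outweighs the two others, and two neighbours of a vertex
     that both get something in their pairs with it span a strictly heavier
     edge.
   - Hence two triangles sharing an edge have it as their strictly heaviest
     edge, a vertex outside a triangle gets nothing in its pairs with the
     triangle, and two triangles never meet in a single vertex.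
   - Growing breadth-first layers around a triangle, every new vertex has a
     positive share in its pair with some vertex of the previous layer; so in
     a connected graph the first vertex of a disjoint triangle reached this way
     contradicts the previous point: all triangles meet.
   Parts (a) and (b) of the theorem follow, and uniqueness of the strictly
   heaviest edge turns "any two triangles share it" into "one edge for all". *)

Ltac finset3 := let z := fresh "z" in
  first [apply/subsetP => z | apply/setP => z]; rewrite !inE;
  repeat match goal with |- context [z == ?a] => case: (z == a) end.

Lemma sum_set2 (M : nmodType) (V : finType) (a b : V) (F : V -> M) :
  a != b -> \sum_(i in [set a; b]) F i = F a + F b.
Proof. by move=> ab; rewrite big_setU1 ?big_set1 // inE. Qed.

Lemma sum_set3 (M : nmodType) (V : finType) (a b c : V) (F : V -> M) :
  a != b -> a != c -> b != c ->
  \sum_(i in [set a; b; c]) F i = F a + F b + F c.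
Proof.
move=> ab ac bc; rewrite setUC big_setU1 ?sum_set2 //=; first by rewrite addrC.
by rewrite !inE negb_or !(eq_sym c) ac bc.
Qed.

Lemma no_four_distinct_in_set3 (V : finType) (b c f y1 y2 y3 y4 : V) :
  y1 \in [set b; c; f] -> y2 \in [set b; c; f] -> y3 \in [set b; c; f] ->
  y4 \in [set b; c; f] ->
  [&& y1 != y2, y1 != y3, y1 != y4, y2 != y3, y2 != y4 & y3 != y4] = false.
Proof.
rewrite !inE; do 4! (case/orP=> [/orP[]|] /eqP->).
all: by rewrite ?eqxx ?andbF.
Qed.

Section MatchingValue.
Variables (R : realFieldType) (V : finType) (e : rel V) (w : V -> V -> R).

Lemma gamma_ge0 (S : {set V}) : 0 <= gamma e w S.
Proof.
rewrite /gamma; elim/big_rec: _ => // M y _ y0.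
by rewrite le_max y0 orbT.
Qed.

Lemma gamma_ge_matching (S : {set V}) (M : {set V * V}) :
  is_matching e S M -> matching_weight w M <= gamma e w S.
Proof. by move=> HM; rewrite /gamma (bigD1 M) //= le_max lexx. Qed.

Lemma matching_in_set3 (S : {set V}) (b c f : V) (M : {set V * V}) :
  irreflexive e -> S \subset [set b; c; f] -> is_matching e S M ->
  M = set0 \/ exists2 p, M = [set p] & [&& e p.1 p.2, p.1 \in S & p.2 \in S].
Proof.
move=> irr sS /andP[/forallP onS /forallP disj].
have [->|/set0Pn[p pM]] := eqVneq M set0; [by left | right; exists p].
  apply/setP => q; rewrite inE; apply/idP/eqP => [qM|->//].
  apply/eqP; apply: contraT => qp.
  have /and3P[eq q1 q2] := implyP (onS q) qM.
  have /and3P[ep p1 p2] := implyP (onS p) pM.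
  have pq : p != q by rewrite eq_sym.
  have /and4P[d1 d2 d3 d4] :=
    implyP (implyP (forallP (implyP (disj p) pM) q) qM) pq.
  have loopless y z : e y z -> y != z by apply: contraTneq => ->; rewrite irr.
  have := no_four_distinct_in_set3 (subsetP sS _ p1) (subsetP sS _ p2)
    (subsetP sS _ q1) (subsetP sS _ q2).
  by rewrite loopless // d1 d2 d3 d4 loopless.
exact: implyP (onS p) pM.
Qed.

Lemma gamma_le_small (S : {set V}) (b c f : V) (m : R) : irreflexive e ->
  S \subset [set b; c; f] -> 0 <= m ->
  (forall y z, y \in S -> z \in S -> e y z -> w y z <= m) -> gamma e w S <= m.
Proof.
move=> irr sS m0 bound; rewrite /gamma.
apply: (big_ind (fun y => y <= m)) => //.
  by move=> y z ym zm; rewrite ge_max ym.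
move=> M /(matching_in_set3 irr sS) [->|[p -> /and3P[ep p1 p2]]].
  by rewrite /matching_weight big_set0.
by rewrite /matching_weight big_set1; apply: bound.
Qed.

End MatchingValue.

Section StrictMaxEdge.
Variables (R : realFieldType) (V : finType) (w : V -> V -> R).
Hypothesis w_sym : forall a b, w a b = w b a.

Lemma strict_max_edge_unique (T : {set V}) (u v u' v' : V) :
  strict_max_edge w T u v -> strict_max_edge w T u' v' ->
  [set u; v] = [set u'; v'].
Proof.
case=> uT vT uv max_uv [u'T v'T uv' max_uv'].
apply/eqP; apply: contraT => ne.
have ne' : [set u'; v'] != [set u; v] by rewrite eq_sym.
have := max_uv _ _ u'T v'T uv' ne'; have := max_uv' _ _ uT vT uv ne; lra.
Qed.

Lemma strict_max_edge_sym (T : {set V}) (u v : V) :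
  strict_max_edge w T u v -> strict_max_edge w T v u.
Proof.
case=> uT vT uv max_uv; split; rewrite 1?eq_sym // => y z yT zT yz ne.
rewrite [w v u]w_sym; apply: max_uv => //.
by rewrite [[set v; u]]setUC in ne.
Qed.

Lemma strict_max_edge_transfer (T0 T : {set V}) (u v u' v' : V) :
  strict_max_edge w T0 u v -> strict_max_edge w T0 u' v' ->
  strict_max_edge w T u' v' -> strict_max_edge w T u v.
Proof.
move=> max0 max0' maxT; have E := strict_max_edge_unique max0 max0'.
have [_ _ uv _] := max0; move: uv.
have : u \in [set u'; v'] by rewrite -E !inE eqxx.
have : v \in [set u'; v'] by rewrite -E !inE eqxx orbT.
rewrite !inE => /orP[]/eqP-> /orP[]/eqP-> //; rewrite ?eqxx // => _.
exact: strict_max_edge_sym.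
Qed.

End StrictMaxEdge.

Lemma set_nonempty (V : finType) (A : {set V}) (a : V) : a \in A -> A != set0.
Proof. by move=> aA; apply/set0Pn; exists a. Qed.

Lemma set3_neq0 (V : finType) (a b c : V) : [set a; b; c] != set0.
Proof. by apply: (@set_nonempty _ _ a); rewrite !inE eqxx. Qed.

Section Triangles.
Variables (V : finType) (e : rel V).
Hypothesis e_sym : symmetric e.

(* An ordered triangle: three pairwise adjacent vertices (in a loopless graph
   they are automatically distinct). *)
Definition tri (a b c : V) : Prop := [/\ e a b, e b c & e a c].

Lemma tri_swap12 a b c : tri a b c -> tri b a c.
Proof. by case=> eab ebc eac; split; rewrite // e_sym. Qed.

Lemma tri_swap23 a b c : tri a b c -> tri a c b.
Proof. by case=> eab ebc eac; split; rewrite // e_sym. Qed.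

Lemma triangle_from2 (T : {set V}) (u y : V) : is_triangle e T ->
  u \in T -> y \in T -> u != y -> exists z, tri u y z /\ T = [set u; y; z].
Proof.
case=> card3 adj uT yT uy.
have yTu : y \in T :\ u by rewrite !inE eq_sym uy.
have /eqP/cards1P[z Ez] : #|T :\ u :\ y| = 1%N.
  by move: card3; rewrite (cardsD1 u) (cardsD1 y (T :\ u)) uT yTu => -[].
have : z \in T :\ u :\ y by rewrite Ez inE.
rewrite !inE => /and3P[zy zu zT].
have ET : T = [set u; y; z] by rewrite -setUA -Ez !setD1K.
exists z; split=> //; split; apply: adj => //; by rewrite 1?eq_sym.
Qed.

Lemma triangle_from (T : {set V}) (u : V) : is_triangle e T -> u \in T ->
  exists b c, tri u b c /\ T = [set u; b; c].
Proof.
move=> HT uT; have [card3 _] := HT.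
have card2 : #|T :\ u| = 2%N by move: card3; rewrite (cardsD1 u) uT => -[].
have /set0Pn[y] : T :\ u != set0 by rewrite -card_gt0 card2.
rewrite !inE => /andP[yu yT]; rewrite eq_sym in yu.
have [z [Tuyz ET]] := triangle_from2 HT uT yT yu.
by exists y, z.
Qed.

Fixpoint layer (T : {set V}) (n : nat) : {set V} :=
  if n is m.+1 then layer T m :|: [set v | [exists u in layer T m, e u v]]
  else T.

Lemma layer_step (T : {set V}) (n : nat) (u v : V) :
  u \in layer T n -> e u v -> v \in layer T n.+1.
Proof.
move=> un euv; rewrite /= !inE; apply/orP; right.
by apply/existsP; exists u; rewrite un.
Qed.

Lemma layer_grow (T : {set V}) (n : nat) : layer T n \subset layer T n.+1.
Proof. exact: subsetUl. Qed.

Lemma layer_reach (T : {set V}) (u v : V) : u \in T -> connect e u v ->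
  exists n, v \in layer T n.
Proof.
move=> uT /connectP[pth epth ->]; exists (0 + size pth)%N.
have : u \in layer T 0 by [].
elim: pth u 0%N epth {uT} => [|y pth IH] u n /=; first by rewrite addn0.
case/andP=> euy epth un; rewrite -addSnnS.
by apply: IH epth _; apply: layer_step euy.
Qed.

End Triangles.

Section PopulationMonotonic.
Variables (R : realFieldType) (V : finType) (e : rel V) (w : V -> V -> R)
  (x : {set V} -> V -> R).
Hypothesis e_sym : symmetric e.
Hypothesis e_irr : irreflexive e.
Hypothesis w_sym : forall a b, w a b = w b a.
Hypothesis w_pos : forall a b, e a b -> 0 < w a b.
Hypothesis x_eff : forall S, S != set0 -> \sum_(i in S) x S i = gamma e w S.
Hypothesis x_mon :
  forall (S T : {set V}) i, S \subset T -> i \in S -> x S i <= x T i.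

Local Notation tri := (tri e).

Lemma edge_neq a b : e a b -> a != b.
Proof. by apply: contraTneq => ->; rewrite e_irr. Qed.

Lemma tri_neq a b c : tri a b c -> [/\ a != b, b != c & a != c].
Proof. by case=> eab ebc eac; split; apply: edge_neq. Qed.

Lemma tri_wpos a b c : tri a b c -> [/\ 0 < w a b, 0 < w b c & 0 < w a c].
Proof. by case=> eab ebc eac; split; apply: w_pos. Qed.

Lemma gamma_triple_le a b c (m : R) : 0 <= m ->
  (e a b -> w a b <= m) -> (e b c -> w b c <= m) -> (e a c -> w a c <= m) ->
  gamma e w [set a; b; c] <= m.
Proof.
move=> m0 hab hbc hac; apply: (gamma_le_small e_irr (subxx _) m0).
move=> y z; rewrite !inE => /orP[/orP[]|] /eqP-> /orP[/orP[]|] /eqP->;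
  rewrite ?e_irr // => E.
all: first [exact: hab E | exact: hbc E | exact: hac E | rewrite w_sym].
all: first [apply: hab | apply: hbc | apply: hac]; by rewrite e_sym.
Qed.

Lemma payoff_ge0 (S : {set V}) i : i \in S -> 0 <= x S i.
Proof.
move=> iS; have single0 : x [set i] i = 0.
  have := x_eff (set_nonempty (set11 i)); rewrite big_set1 => ->.
  apply/eqP; rewrite eq_le gamma_ge0 andbT.
  apply: (@gamma_le_small _ _ _ _ _ i i i) => //; first by finset3.
  by move=> y z; rewrite !inE => /eqP-> /eqP->; rewrite e_irr.
by rewrite -single0; apply: x_mon; rewrite ?sub1set ?inE.
Qed.

Definition share (i j : V) : R := x [set i; j] i.

Lemma share_ge0 i j : 0 <= share i j.
Proof. by apply: payoff_ge0; rewrite !inE eqxx. Qed.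

Lemma share_le (S : {set V}) i j : i \in S -> j \in S -> share i j <= x S i.
Proof.
move=> iS jS; apply: x_mon; last by rewrite !inE eqxx.
by apply/subsetP => z; rewrite !inE => /orP[]/eqP->.
Qed.

Lemma gamma_edge i j : e i j -> gamma e w [set i; j] = w i j.
Proof.
move=> eij; apply/eqP; rewrite eq_le; apply/andP; split.
  apply: (@gamma_le_small _ _ _ _ _ i j j) => //; first by finset3.
    exact/ltW/w_pos.
  move=> y z; rewrite !inE => /orP[]/eqP-> /orP[]/eqP->; rewrite ?e_irr //.
  by rewrite w_sym.
have M : is_matching e [set i; j] [set (i, j)].
  apply/andP; split; apply/forallP => q; apply/implyP; rewrite inE => /eqP-> /=.
    by rewrite eij !inE !eqxx ?orbT.
  by apply/forallP => r; apply/implyP; rewrite inE => /eqP->; rewrite eqxx.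
by have := gamma_ge_matching w M; rewrite /matching_weight big_set1.
Qed.

Lemma share_sum i j : e i j -> share i j + share j i = w i j.
Proof.
move=> eij; have := x_eff (set_nonempty (setU11 i [set j])).
rewrite sum_set2 ?edge_neq // gamma_edge //.
by rewrite /share setUC.
Qed.

(* If bc is a heaviest edge of the coalition {b, c, f}, then f gets nothing in
   its pair with c: the coalition is worth w b c, which b and c already
   collect through their own pair. *)
Lemma share_zero_of_heaviest b c f : b != f -> e b c -> e c f ->
  w c f <= w b c -> (e b f -> w b f <= w b c) -> share f c = 0.
Proof.
move=> bf ebc ecf wcf wbf; have [bc cf] := (edge_neq ebc, edge_neq ecf).
have g : gamma e w [set b; c; f] <= w b c.
  by apply: gamma_triple_le => //; exact/ltW/w_pos.
have := x_eff (set3_neq0 b c f); rewrite sum_set3 // => sum_x.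
have xb : share b c <= x [set b; c; f] b by apply: share_le; rewrite !inE eqxx ?orbT.
have xc : share c b <= x [set b; c; f] c by apply: share_le; rewrite !inE eqxx ?orbT.
have xf : share f c <= x [set b; c; f] f by apply: share_le; rewrite !inE eqxx ?orbT.
have := share_sum ebc; have := share_ge0 f c; lra.
Qed.

Definition apex a b c := [/\ tri a b c, w a b <= w b c & w a c <= w b c].

Lemma apex_cases a b c : tri a b c -> [\/ apex a b c, apex b a c | apex c a b].
Proof.
move=> T; have := w_sym a b; have := w_sym a c; have := w_sym b c => ? ? ?.
have Tb := tri_swap12 e_sym T; have Tc := tri_swap12 e_sym (tri_swap23 e_sym T).
case: (leP (w a b) (w b c)) => h1; case: (leP (w a c) (w b c)) => h2;
  case: (leP (w a b) (w a c)) => h3.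
all: first [ by apply: Or31; split => //; lra | by apply: Or32; split => //; lra
           | by apply: Or33; split => //; lra | lra ].
Qed.

Lemma apex_shares a b c : apex a b c ->
  [/\ share a b = 0, share a c = 0, w a b <= share b c, w a c <= share c b
    & w a b + w a c <= w b c].
Proof.
case=> T hab hac; have [eab ebc eac] := T; have [ab bc ac] := tri_neq T.
have [pab pbc pac] := tri_wpos T.
have := w_sym a b; have := w_sym a c; have := w_sym b c => wbc wac wab.
have zb : share a b = 0.
  apply: (@share_zero_of_heaviest c) => [||||_];
    [by rewrite eq_sym | by rewrite e_sym | by rewrite e_sym | lra | lra].
have zc : share a c = 0.
  apply: (@share_zero_of_heaviest b) => [||||_];
    [by rewrite eq_sym | done | by rewrite e_sym | lra | lra].
have g : gamma e w [set a; b; c] <= w b c by apply: gamma_triple_le => [|_|_|_]; lra.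
have := x_eff (set3_neq0 a b c); rewrite sum_set3 // => sum_x.
have xa : 0 <= x [set a; b; c] a by apply: payoff_ge0; rewrite !inE eqxx.
have xba : share b a <= x [set a; b; c] b by apply: share_le; rewrite !inE eqxx ?orbT.
have xbc : share b c <= x [set a; b; c] b by apply: share_le; rewrite !inE eqxx ?orbT.
have xca : share c a <= x [set a; b; c] c by apply: share_le; rewrite !inE eqxx ?orbT.
have xcb : share c b <= x [set a; b; c] c by apply: share_le; rewrite !inE eqxx ?orbT.
have := share_sum eab; have := share_sum eac; have := share_sum ebc.
by split => //; lra.
Qed.

(* If two neighbours b, d of a both get something in their pairs with a, then
   b and d are adjacent and bd is strictly heavier than ab and ad: otherwise
   ab or ad would be a heaviest edge of {a, b, d}. *)
Lemma common_neighbour_shares a b d : b != d -> e a b -> e a d ->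
  0 < share b a -> 0 < share d a -> [/\ e b d, w a b < w b d & w a d < w b d].
Proof.
wlog le_db : b d / w a d <= w a b.
  move=> hwlog bd eab ead pb pd; case: (leP (w a d) (w a b)) => h.
    exact: hwlog.
  have db : d != b by rewrite eq_sym.
  have [edb l1 l2] := hwlog d b (ltW h) db ead eab pd pb.
  by have := w_sym b d; split; rewrite 1?e_sym //; lra.
move=> bd eab ead pb pd; have := w_sym a b => wab.
have [ebd|nbd] := boolP (e b d); last first.
  suff: share d a = 0 by lra.
  apply: (share_zero_of_heaviest bd) => //; first by rewrite e_sym.
    by lra.
  by move=> ebd; rewrite ebd in nbd.
have [lt_bd|ge_bd] := ltP (w a b) (w b d); last first.
  suff: share d a = 0 by lra.
  apply: (share_zero_of_heaviest bd) => //.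
  - by rewrite e_sym.
  - by lra.
  - by move=> _; lra.
by split => //; lra.
Qed.

Lemma triangle_positive_share v b c : tri v b c ->
  0 < share b v \/ 0 < share c v.
Proof.
move=> T; have [evb ebc evc] := T; have [pvb pbc pvc] := tri_wpos T.
have := w_sym b c => wbc.
case: (apex_cases T) => A; have [z1 z2 l1 l2 _] := apex_shares A.
- by left; have := share_sum evb; lra.
- by right; lra.
- by left; lra.
Qed.

Lemma shared_edge_not_heaviest u v a b : apex v u a -> tri u v b -> a != b ->
  False.
Proof.
move=> A1 T2 ab; have [T1 _ _] := A1; have [_ eua eva] := T1.
have [euv evb eub] := T2; have [pvu pua pva] := tri_wpos T1.
have [_ pvb pub] := tri_wpos T2.
have := w_sym v b; have := w_sym u v => wuv wvb.
have [zvu zva hvu hva _] := apex_shares A1.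
have puv : 0 < share u v by have := share_sum euv; lra.
case: (apex_cases T2) => A2; have [y1 y2 y3 y4 _] := apex_shares A2.
- by lra.
- have pa : 0 < share a u by lra.
  have pb : 0 < share b u by lra.
  have [eab l1 l2] := common_neighbour_shares ab eua eub pa pb.
  have [zua _ _ _ _] := apex_shares (And3 (And3 eua eab eub) (ltW l1) (ltW l2)).
  by lra.
- by lra.
Qed.

Lemma shared_edge_heaviest u v a b : tri u v a -> tri u v b -> a != b ->
  w u a < w u v /\ w v a < w u v.
Proof.
move=> T1 T2 ab; have [puv pva pua] := tri_wpos T1.
have := w_sym u a; have := w_sym v a; have := w_sym u v => wuv wva wua.
case: (apex_cases T1) => A.
- by case: (shared_edge_not_heaviest A (tri_swap12 e_sym T2) ab).
- by case: (shared_edge_not_heaviest A T2 ab).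
- by have [_ _ _ _ light] := apex_shares A; split; lra.
Qed.

Lemma outside_share_zero q b c y : tri q b c -> e q y -> y != b -> y != c ->
  share y q = 0.
Proof.
wlog pos_b : b c / 0 < share b q.
  move=> hwlog T eqy yb yc; case: (triangle_positive_share T) => pos.
    exact: hwlog pos T eqy yb yc.
  exact: hwlog pos (tri_swap23 e_sym T) eqy yc yb.
move=> T eqy yb yc; have := share_ge0 y q.
rewrite le_eqVlt => /orP[/eqP<- //|pos_y].
have [eqb _ _] := T; have by' : b != y by rewrite eq_sym.
have [eby l1 _] := common_neighbour_shares by' eqb eqy pos_b pos_y.
have [_ l2] := shared_edge_heaviest (And3 eqb eby eqy) T yc.
by have := w_sym b y; lra.
Qed.

Lemma no_single_vertex_meeting v b c d f : tri v b c -> tri v d f ->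
  d != b -> d != c -> f != b -> f != c -> False.
Proof.
move=> T1 T2 db dc fb fc; have [evd _ evf] := T2.
have := outside_share_zero T1 evd db dc.
have := outside_share_zero T1 evf fb fc.
by case: (triangle_positive_share T2) => ? ? ?; lra.
Qed.

Lemma strict_max_of_lt u v a : tri u v a -> w u a < w u v -> w v a < w u v ->
  strict_max_edge w [set u; v; a] u v.
Proof.
move=> T hua hva; have [uv _ _] := tri_neq T.
have := w_sym u a; have := w_sym v a; have := w_sym u v => ? ? ?.
split; rewrite ?inE ?eqxx ?orbT //.
move=> y z; rewrite !inE => /orP[/orP[]|]/eqP-> /orP[/orP[]|]/eqP-> yz ne.
all: first [ by rewrite eqxx in yz | by rewrite eqxx in ne
           | by rewrite setUC eqxx in ne | lra ].
Qed.

Lemma triangle_strict_max a b c : tri a b c ->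
  exists u v, e u v /\ strict_max_edge w [set a; b; c] u v.
Proof.
move=> T; have [eab ebc eac] := T; have [pab pbc pac] := tri_wpos T.
have := w_sym a b; have := w_sym a c; have := w_sym b c => ? ? ?.
have Tacb := tri_swap23 e_sym T.
have Tbca := tri_swap23 e_sym (tri_swap12 e_sym T).
case: (apex_cases T) => A; have [_ _ _ _ light] := apex_shares A.
- exists b, c; split => //.
  rewrite (_ : [set a; b; c] = [set b; c; a]); last by finset3.
  by apply: strict_max_of_lt => //; lra.
- exists a, c; split => //.
  rewrite (_ : [set a; b; c] = [set a; c; b]); last by finset3.
  by apply: strict_max_of_lt => //; lra.
- by exists a, b; split => //; apply: strict_max_of_lt => //; lra.
Qed.

Lemma triangles_sharing_edge (T1 T2 : {set V}) u y :
  is_triangle e T1 -> is_triangle e T2 ->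
  u \in T1 -> u \in T2 -> y \in T1 -> y \in T2 -> u != y ->
  exists a b, e a b /\ strict_max_edge w T1 a b /\ strict_max_edge w T2 a b.
Proof.
move=> HT1 HT2 u1 u2 y1 y2 uy.
have [c [Tc ->]] := triangle_from2 HT1 u1 y1 uy.
have [f [Tf ->]] := triangle_from2 HT2 u2 y2 uy.
have [<-|cf] := eqVneq c f.
  by have [a [b [eab max]]] := triangle_strict_max Tc; exists a, b.
have [euy _ _] := Tc; have fc : f != c by rewrite eq_sym.
have [l1 l2] := shared_edge_heaviest Tc Tf cf.
have [l3 l4] := shared_edge_heaviest Tf Tc fc.
by exists u, y; split => //; split; apply: strict_max_of_lt.
Qed.

Lemma outside_share_zero_set (T : {set V}) u v : is_triangle e T ->
  u \in T -> v \notin T -> e u v -> share v u = 0.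
Proof.
move=> HT uT vT euv; have [b [c [Tbc ET]]] := triangle_from HT uT.
move: vT; rewrite ET !inE !negb_or => /andP[/andP[_ vb] vc].
exact: outside_share_zero Tbc euv vb vc.
Qed.

(* For n = 0 this is
   outside_share_zero_set; in the induction step common_neighbour_shares
   would otherwise put the vertex into an earlier layer. *)
Lemma layer_parent (T : {set V}) : is_triangle e T -> forall n v,
  v \in layer e T n.+1 -> v \notin layer e T n ->
  exists2 u, u \in layer e T n & e u v /\ 0 < share u v.
Proof.
move=> HT; elim=> [|n IH] v /setUP[-> //|];
  rewrite inE => /existsP[u /andP[un euv]] vn.
  exists u => //; split => //; have := outside_share_zero_set HT un vn euv.
  by have := share_sum euv; have := w_pos euv; lra.
have un' : u \notin layer e T n.
  by apply: contra vn => un'; apply: layer_step euv.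
have [t tn [etu ptu]] := IH u un un'.
have etu_sym : e u t by rewrite e_sym.
exists u => //; split => //.
have := share_ge0 u v; rewrite le_eqVlt => /orP[/eqP zero|//].
have pvu : 0 < share v u by have := share_sum euv; have := w_pos euv; lra.
have tv : t != v.
  by apply: contraNneq vn => <-; apply: (subsetP (layer_grow _ _ _)).
have [etv _ _] := common_neighbour_shares tv etu_sym euv ptu pvu.
by move: vn; rewrite (layer_step tn etv).
Qed.

(* In a connected graph any two triangles meet: otherwise, at the first layer
   around T1 that reaches T2, a vertex of T2 would get something in its pair
   with a neighbour outside T2. *)
Lemma triangles_meet (T1 T2 : {set V}) : (forall u v, connect e u v) ->
  is_triangle e T1 -> is_triangle e T2 -> T1 :&: T2 != set0.
Proof.
move=> conn HT1 HT2; apply: contraT => /negPn/eqP disj.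
have /card_gt0P[a aT1] : (0 < #|T1|)%N by case: HT1 => ->.
have /card_gt0P[d dT2] : (0 < #|T2|)%N by case: HT2 => ->.
pose reached n := [exists z in T2, z \in layer e T1 n].
have [n0 dn0] := layer_reach aT1 (conn a d).
have ex_reached : exists n, reached n.
  by exists n0; apply/existsP; exists d; rewrite dT2.
case: (ex_minnP ex_reached) => N /existsP[z /andP[zT2 zN]] minN.
case: N zN minN => [|M] zN minN.
  by move/setP: disj => /(_ z); rewrite !inE zN zT2.
have not_reached : ~~ reached M by apply/negP => /minN; rewrite ltnn.
have zM : z \notin layer e T1 M.
  by apply: contra not_reached => zM; apply/existsP; exists z; rewrite zT2.
have [u uM [euz puz]] := layer_parent HT1 zN zM.
have uT2 : u \notin T2.
  by apply: contra not_reached => uT2; apply/existsP; exists u; rewrite uT2.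
have ezu : e z u by rewrite e_sym.
by have := outside_share_zero_set HT2 zT2 uT2 ezu; lra.
Qed.

Lemma meeting_triangles_share_two (T1 T2 : {set V}) v :
  is_triangle e T1 -> is_triangle e T2 -> v \in T1 -> v \in T2 ->
  exists2 y, y != v & y \in T1 :&: T2.
Proof.
move=> HT1 HT2 v1 v2.
have [b [c [Tbc E1]]] := triangle_from HT1 v1.
have [d [f [Tdf E2]]] := triangle_from HT2 v2.
have [vd _ vf] := tri_neq Tdf.
have [y /andP[yDF yBC]] : exists y, (y \in [set d; f]) && (y \in [set b; c]).
  apply/existsP; apply: contraT; rewrite negb_exists => /forallP none.
  have := none d; have := none f; rewrite !inE !eqxx ?orbT /= !negb_or.
  move=> /andP[fb fc] /andP[db dc].
  by case: (no_single_vertex_meeting Tbc Tdf db dc fb fc).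
move: yDF yBC; rewrite !inE => yDF yBC; exists y.
  by case/orP: yDF => /eqP->; rewrite eq_sym.
by rewrite E1 E2 !inE; case/orP: yBC => ->; case/orP: yDF => ->; rewrite !orbT.
Qed.

Lemma meeting_triangles_common_max (T1 T2 : {set V}) :
  is_triangle e T1 -> is_triangle e T2 -> T1 :&: T2 != set0 ->
  exists u v, e u v /\ strict_max_edge w T1 u v /\ strict_max_edge w T2 u v.
Proof.
move=> HT1 HT2 /set0Pn[v /setIP[v1 v2]].
have [y yv /setIP[y1 y2]] := meeting_triangles_share_two HT1 HT2 v1 v2.
have vy : v != y by rewrite eq_sym.
exact: triangles_sharing_edge HT1 HT2 v1 v2 y1 y2 vy.
Qed.

Lemma common_heaviest_edge : (forall u v, connect e u v) ->
  (exists T, is_triangle e T) ->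
  exists u v, e u v /\ forall T, is_triangle e T -> strict_max_edge w T u v.
Proof.
move=> conn [T0 HT0].
have [u [v [euv [max0 _]]]] :=
  meeting_triangles_common_max HT0 HT0 (triangles_meet conn HT0 HT0).
exists u, v; split => // T HT.
have [u' [v' [_ [max0' maxT]]]] :=
  meeting_triangles_common_max HT0 HT (triangles_meet conn HT0 HT).
exact: (strict_max_edge_transfer w_sym max0 max0' maxT).
Qed.

End PopulationMonotonic.

Theorem mainTheorem13 (R : realFieldType) (V : finType) (e : rel V)
  (w : V -> V -> R) :
  simple_graph e -> edge_weights e w -> connected_graph e ->
  population_monotonic e w ->
  (* (a) *)
  (forall T1 T2 : {set V}, is_triangle e T1 -> is_triangle e T2 ->
     T1 :&: T2 != set0 ->
     exists u v, e u v /\ strict_max_edge w T1 u v /\ strict_max_edge w T2 u v)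
  /\
  (* (b) *)
  (forall T1 T2 : {set V}, is_triangle e T1 -> is_triangle e T2 ->
     T1 :&: T2 != set0) /\
  ((exists T : {set V}, is_triangle e T) ->
   exists u v, e u v /\
     forall T : {set V}, is_triangle e T -> strict_max_edge w T u v).
Proof.
move=> [e_sym e_irr] [w_sym w_pos] conn [x [x_eff x_mon]].
split; [|split].
- exact: (meeting_triangles_common_max e_sym e_irr w_sym w_pos x_eff x_mon).
- move=> T1 T2.
  exact: (triangles_meet e_sym e_irr w_sym w_pos x_eff x_mon conn).
- exact: (common_heaviest_edge e_sym e_irr w_sym w_pos x_eff x_mon conn).
Qed.
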